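(* Let $K$ be a field in which $-1$ is not a square, $X$ an indeterminate, $D=K[X^2,X^3]_{(X^2,X^3)}$ (localization of $K[X^2,X^3]$ at its maximal ideal $(X^2,X^3)$), $V=K[X]_{(X^2+1)}$, and $R=D\cap V\subseteq K(X)$. Then $X^2+1$ is a prime element of $R$, $X^2$ and $X^3$ are irreducible in $R$, and $R$ is a one-dimensional Noetherian integral domain with exactly two maximal ideals, whose prime elements are exactly the associates of $X^2+1$, which has irreducible elements not associated to $X^2+1$, and none of those irreducible elements is absolutely irreducible.
   Context: Factorization notions for a domain refer to its monoid of non-zero elements. Two factorizations into irreducibles $a_1\cdots a_n=b_1\cdots b_m$ of the same element are essentially the same if $n=m$ and, after re-indexing, $a_j$ and $b_j$ are associated for all $j$. An irreducible $r$ is absolutely irreducible if for every $n\in\mathbb N$, every factorization of $r^n$ into irreducibles is essentially the same as $r^n=r\cdots r$. *)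

From HB Require Import structures.
From mathcomp Require Import all_boot all_order all_algebra.
From mathcomp Require Import fraction.
Set Implicit Arguments. Unset Strict Implicit. Unset Printing Implicit Defensive.
Import Order.TTheory GRing.Theory Num.Theory.
Local Open Scope ring_scope.

Section SubringNotions.
Variable F : fieldType.
Variable S : F -> Prop.

Definition is_subring : Prop :=
  [/\ S 1, (forall x y, S x -> S y -> S (x - y)) &
      (forall x y, S x -> S y -> S (x * y))].

Definition unitIn (u : F) : Prop := S u /\ exists v, S v /\ u * v = 1.
Definition dvdIn (a b : F) : Prop := exists c, S c /\ b = a * c.
Definition assocIn (a b : F) : Prop := exists u, unitIn u /\ b = a * u.

Definition irredIn (a : F) : Prop :=
  [/\ S a, a <> 0, ~ unitIn a &
      forall b c, S b -> S c -> a = b * c -> unitIn b \/ unitIn c].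

Definition primeIn (p : F) : Prop :=
  [/\ S p, p <> 0, ~ unitIn p &
      forall a b, S a -> S b -> dvdIn p (a * b) -> dvdIn p a \/ dvdIn p b].

Definition abs_irredIn (r : F) : Prop :=
  irredIn r /\
  forall (n : nat) (s : seq F), (forall a, a \in s -> irredIn a) ->
    \prod_(a <- s) a = r ^+ n ->
    size s = n /\ (forall a, a \in s -> assocIn r a).

Definition idealIn (I : F -> Prop) : Prop :=
  [/\ forall x, I x -> S x, I 0,
      (forall x y, I x -> I y -> I (x + y)) &
      (forall r x, S r -> I x -> I (r * x))].

Definition proper_idealIn (I : F -> Prop) : Prop := idealIn I /\ ~ I 1.

Definition set_eq (I J : F -> Prop) : Prop := forall x, I x <-> J x.
Definition set_sub (I J : F -> Prop) : Prop := forall x, I x -> J x.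
Definition set_ssub (I J : F -> Prop) : Prop := set_sub I J /\ ~ set_eq I J.

Definition prime_idealIn (P : F -> Prop) : Prop :=
  proper_idealIn P /\
  forall a b, S a -> S b -> P (a * b) -> P a \/ P b.

Definition maximal_idealIn (M : F -> Prop) : Prop :=
  proper_idealIn M /\
  forall J, proper_idealIn J -> set_sub M J -> set_eq J M.

Definition noetherianIn : Prop :=
  forall I, idealIn I ->
    exists g : seq F, (forall a, a \in g -> S a) /\
      forall x, I x <->
        exists c : 'I_(size g) -> F, (forall i, S (c i)) /\
          x = \sum_(i < size g) c i * g`_i.

Definition krull_dim_one : Prop :=
  (exists P0 P1, [/\ prime_idealIn P0, prime_idealIn P1 & set_ssub P0 P1]) /\
  ~ (exists P0 P1 P2, [/\ prime_idealIn P0, prime_idealIn P1, prime_idealIn P2,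
                        set_ssub P0 P1 & set_ssub P1 P2]).

Definition exactly_two_maximal : Prop :=
  exists M1 M2, [/\ maximal_idealIn M1, maximal_idealIn M2, ~ set_eq M1 M2 &
    forall M, maximal_idealIn M -> set_eq M M1 \/ set_eq M M2].

End SubringNotions.

Notation tofrac := (@FracField.tofrac _).
Notation "x %:F" := (@FracField.tofrac _ x) : ring_scope.

Section Rings.
Variable K : fieldType.
Local Notation KX := {fraction {poly K}}.

Definition inV (x : KX) : Prop :=
  exists f g : {poly K}, ~~ (('X^2 + 1) %| g) /\ x = f%:F / g%:F.

(* D = K[X^2,X^3]_(X^2,X^3): K[X^2,X^3] = polynomials with zero coefficient
   of X; its maximal ideal (X^2,X^3) = those with zero constant term. *)
Definition inD (x : KX) : Prop :=
  exists f g : {poly K}, [/\ f`_1 = 0, g`_1 = 0, g`_0 != 0 & x = f%:F / g%:F].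

Definition inR (x : KX) : Prop := inD x /\ inV x.
End Rings.

(* R = S^-1 A for A = K[X^2, X^3] and S the polynomials of A outside the primes
   (X^2, X^3) and (X^2 + 1) of A, so every x in R is f / g with f in A, g in S,
   and x is a unit iff f(0) != 0 and X^2 + 1 does not divide f.  Hence the
   non-units are covered by M0 = (X^2, X^3) R and pR, which are therefore the
   two maximal ideals.  A nonzero prime inside M0 contains a power of X, hence
   X^2 and X^3, hence all of M0; one inside pR contains a power of p, hence p:
   R has dimension one.  An ideal of A is generated by an element u of least
   degree and an element of degree deg u + 1 (the X^d u, d >= 2, fill all larger
   degrees), so R is Noetherian.  An irreducible a not associated to p has the
   form X^b k / g with b in {2, 3} and k(0) != 0, and then a^3 = X^3 (X^3 k^3 / g^3)
   resp. a^2 = X^2 X^2 (X^2 k^2 / g^2) is a factorization of the wrong length.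
   Finally a prime q outside pR would give qR = M0, so q would divide X^2 and
   X^3 with X^2 = q * unit, and X = X^3 / X^2 would lie in R. *)

From mathcomp Require Import all_boot all_order all_algebra.
From mathcomp Require Import fraction ring zify.
From Stdlib Require Import Classical.
Set Implicit Arguments. Unset Strict Implicit. Unset Printing Implicit Defensive.
Import GRing.Theory.
Local Open Scope ring_scope.

Section SubringTheory.
Variables (F : fieldType) (S : F -> Prop).
Hypothesis subS : is_subring S.

Lemma subring0 : S 0.
Proof. by case: subS => S1 SB _; rewrite -(subrr 1); exact: SB. Qed.

Lemma subringN x : S x -> S (- x).
Proof. by case: subS => _ SB _ Sx; rewrite -sub0r; exact: SB subring0 Sx. Qed.

Lemma subringD x y : S x -> S y -> S (x + y).
Proof.
by case: subS => _ SB _ Sx Sy; have := SB _ _ Sx (subringN Sy); rewrite opprK.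
Qed.

Lemma subringX x n : S x -> S (x ^+ n).
Proof.
case: subS => S1 _ SM Sx; elim: n => [|n IHn]; first by rewrite expr0.
by rewrite exprS; exact: SM.
Qed.

Lemma idealN I x : idealIn S I -> I x -> I (- x).
Proof.
case=> _ _ _ IM Ix; rewrite -mulN1r; apply: IM Ix.
by case: subS => S1 _ _; exact: subringN.
Qed.

Lemma idealB I x y : idealIn S I -> I x -> I y -> I (x - y).
Proof.
by move=> idI Ix Iy; case: (idI) => _ _ ID _; exact: ID Ix (idealN idI Iy).
Qed.

Lemma ideal_unit I u : idealIn S I -> I u -> unitIn S u -> I 1.
Proof. by case=> _ _ _ IM Iu [_ [v [Sv <-]]]; rewrite mulrC; exact: IM. Qed.

Lemma dvdIn_ideal p : S p -> idealIn S (dvdIn S p).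
Proof.
case: subS => S1 _ SM Sp; split.
- by move=> _ [c [Sc ->]]; exact: SM.
- by exists 0; rewrite mulr0; split=> //; exact: subring0.
- move=> _ _ [c [Sc ->]] [d [Sd ->]]; exists (c + d).
  by rewrite mulrDr; split=> //; exact: subringD.
- move=> r _ Sr [c [Sc ->]]; exists (r * c).
  by rewrite mulrCA; split=> //; exact: SM.
Qed.

Lemma primeInE p :
  primeIn S p <-> [/\ S p, p <> 0 & prime_idealIn S (dvdIn S p)].
Proof.
split=> [[Sp p0 pNU pP] | [Sp p0 [[_ p1] pP]]].
  split=> //; split=> //; split; first exact: dvdIn_ideal.
  by case=> c [Sc e]; apply: pNU; split=> //; exists c.
by split=> // -[_ [v [Sv pv]]]; apply: p1; exists v.
Qed.

Lemma primeIn_assoc p q : primeIn S p -> assocIn S p q -> primeIn S q.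
Proof.
case: subS => _ _ SM [Sp p0 pNU pP] [u [[Su [v [Sv uv]]] ->]].
have u0 : u != 0 by apply: contra_eq_neq uv => ->; rewrite mul0r eq_sym oner_eq0.
have pvu d : p * d = p * u * (v * d) by rewrite mulrA -(mulrA p) uv mulr1.
split.
- exact: SM.
- by apply/eqP; rewrite mulf_neq0 //; apply/eqP.
- case=> _ [w [Sw puw]]; apply: pNU; split=> //.
  by exists (u * w); rewrite mulrA; split=> //; exact: SM.
move=> a b Sa Sb [c [Sc e]].
have /(pP _ _ Sa Sb) : dvdIn S p (a * b).
  by exists (u * c); rewrite e mulrA; split=> //; exact: SM.
by case=> -[d [Sd ->]]; [left | right]; exists (v * d); rewrite -pvu; split=> //;
  exact: SM.
Qed.

Lemma dvdIn_primeIn_assoc p q : S p -> p <> 0 -> ~ unitIn S p ->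
  primeIn S q -> dvdIn S p q -> assocIn S p q.
Proof.
case: subS => S1 _ SM Sp p0 pNU [Sq q0 qNU qP] [z [Sz qE]].
have /(qP _ _ Sp Sz) : dvdIn S q (p * z) by exists 1; rewrite mulr1; split.
case=> -[w [Sw wE]].
- exists z; split=> //; split=> //; exists w; split=> //.
  apply: (mulfI (x := p)); first exact/eqP.
  by rewrite mulr1 {2}wE qE -mulrA.
- case: pNU; split=> //; exists w; split=> //.
  apply: (mulfI (x := q)); first exact/eqP.
  by rewrite mulr1 mulrCA -wE.
Qed.

Lemma prime_idealX Q x n : prime_idealIn S Q -> S x -> Q (x ^+ n) -> Q x.
Proof.
case=> [[_ Q1] QP] Sx; elim: n => [|n IHn]; first by rewrite expr0.
by rewrite exprS => /(QP _ _ Sx (subringX n Sx)) [].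
Qed.

Lemma zero_prime_ideal : prime_idealIn S (fun x => x = 0).
Proof.
split; last by move=> a b _ _ /eqP; rewrite mulf_eq0 => /orP[] /eqP; [left | right].
split; last by move/eqP; rewrite oner_eq0.
split=> //; first by move=> _ ->; exact: subring0.
- by move=> _ _ -> ->; rewrite addr0.
- by move=> r _ _ ->; rewrite mulr0.
Qed.

Lemma maximal_ideal_sub M Q : maximal_idealIn S M -> proper_idealIn S Q ->
  set_sub M Q -> maximal_idealIn S Q.
Proof.
move=> [_ Mmax] Qp MQ; split=> // J Jp QJ x.
have JM := Mmax J Jp (fun y My => QJ y (MQ y My)).
have QM := Mmax Q Qp MQ.
by rewrite JM QM.
Qed.

Section TwoIdealCover.
Variables M1 M2 : F -> Prop.
Hypotheses (M1_proper : proper_idealIn S M1) (M2_proper : proper_idealIn S M2).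
Hypothesis nonunit_cover : forall x, S x -> ~ unitIn S x -> M1 x \/ M2 x.

Lemma proper_ideal_sub_cover I : proper_idealIn S I -> set_sub I M1 \/ set_sub I M2.
Proof.
case=> idI I1; have [IS _ ID _] := idI.
have [[idM1 _] [idM2 _]] := (M1_proper, M2_proper).
have cover y : I y -> M1 y \/ M2 y.
  by move=> Iy; apply: nonunit_cover (IS _ Iy) _ => /(ideal_unit idI Iy).
case: (classic (set_sub I M1)) => [|I_M1]; [by left | right].
move=> b Ib; apply: NNPP => b_M2; apply: I_M1 => a Ia; apply: NNPP => a_M1.
have M1b : M1 b by case: (cover b Ib).
have M2a : M2 a by case: (cover a Ia).
case: (cover (a + b) (ID _ _ Ia Ib)) => [M1ab | M2ab].
- by apply: a_M1; rewrite -(addrK b a); exact: idealB.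
- by apply: b_M2; rewrite -(addKr a b) addrC; exact: idealB.
Qed.

Lemma maximal_of_cover M N : proper_idealIn S M -> ~ set_sub M N ->
  (forall J, proper_idealIn S J -> set_sub J M \/ set_sub J N) ->
  maximal_idealIn S M.
Proof.
move=> Mp MN cover; split=> // J Jp MJ x; split; last exact: MJ.
by case: (cover J Jp) => JM; [exact: JM | case: MN => y /MJ /JM].
Qed.

Hypotheses (M1_notsub : ~ set_sub M1 M2) (M2_notsub : ~ set_sub M2 M1).

Lemma exactly_two_maximal_of_cover : exactly_two_maximal S.
Proof.
have cover2 J : proper_idealIn S J -> set_sub J M2 \/ set_sub J M1.
  by move/proper_ideal_sub_cover => /or_comm.
have M1max := maximal_of_cover M1_proper M1_notsub proper_ideal_sub_cover.
have M2max := maximal_of_cover M2_proper M2_notsub cover2.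
exists M1, M2; split=> //; first by move=> e; apply: M1_notsub => x /e.
move=> M [Mp Mmax]; case: (proper_ideal_sub_cover Mp) => MM; [left | right];
  move=> x; split; try exact: MM.
- exact: (Mmax _ M1_proper MM x).1.
- exact: (Mmax _ M2_proper MM x).1.
Qed.

End TwoIdealCover.

Lemma krull_dim_one_of_primes M :
  (forall Q, prime_idealIn S Q ->
     set_eq Q (fun x => x = 0) \/ maximal_idealIn S Q) ->
  prime_idealIn S M -> ~ set_eq M (fun x => x = 0) -> krull_dim_one S.
Proof.
move=> zero_or_max Mprime M0; split.
  exists (fun x => x = 0), M; split=> //; first exact: zero_prime_ideal.
  split; first by move=> _ ->; have [[[_ ]]] := Mprime.
  by move=> e; apply: M0 => x; exact: iff_sym (e x).
case=> P0 [P1 [P2 [P0prime P1prime [P2proper _] [P01 nP01] [P12 nP12]]]].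
case: (zero_or_max P1 P1prime) => [P1zero | [_ P1max]].
  apply: nP01 => x; split; first exact: P01.
  by move/P1zero => ->; have [[[_ ]]] := P0prime.
by apply: nP12 => x; rewrite (P1max P2 P2proper P12).
Qed.

End SubringTheory.

Lemma tofrac_divE (R : idomainType) (f g f' g' : R) : g != 0 -> g' != 0 ->
  f%:F / g%:F = f'%:F / g'%:F <-> f * g' = f' * g.
Proof.
move=> g0 g'0; split=> [/eqP|fE].
  by rewrite eqr_div ?tofrac_eq0 // -!tofracM tofrac_eq => /eqP.
by apply/eqP; rewrite eqr_div ?tofrac_eq0 // -!tofracM fE.
Qed.

Lemma size_sub_lead (F : fieldType) (f h : {poly F}) : f != 0 -> size h = size f ->
  (size (f - (lead_coef f / lead_coef h)%:P * h)%R < size f)%N.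
Proof.
move=> f0 sh; have sf : (0 < size f)%N by rewrite size_poly_gt0.
have lh : lead_coef h != 0 by rewrite lead_coef_eq0 -size_poly_gt0 sh.
rewrite -(prednK sf) ltnS; apply/leq_sizeP => j hj; rewrite coefB coefCM.
case: (ltngtP j (size f).-1) => [|jf|->]; first by rewrite ltnNge hj.
  rewrite !nth_default ?mulr0 ?subr0 ?sh //; by rewrite -(prednK sf).
by rewrite -lead_coefE -sh -lead_coefE divfK // subrr.
Qed.

Lemma coef1M (R : nzRingType) (f g : {poly R}) :
  (f * g)`_1 = f`_0 * g`_1 + f`_1 * g`_0.
Proof. by rewrite coefM !big_ord_recl big_ord0 addr0. Qed.

Lemma Xn_factor (R : nzRingType) (f : {poly R}) : f != 0 ->
  exists b (k : {poly R}), f = 'X^b * k /\ k`_0 != 0.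
Proof.
move=> f0; have [b [k /implyP /(_ f0) k0 fE]] := multiplicity_XsubC f 0.
exists b, k; split; last by rewrite -horner_coef0.
by rewrite fE polyC0 subr0; exact: commr_polyXn.
Qed.

Lemma classical_argmin (T : Type) (m : T -> nat) (Pr : T -> Prop) :
  (exists x, Pr x) -> exists y, Pr y /\ forall x, Pr x -> (m y <= m x)%N.
Proof.
case=> x0 Px0; move: {2}(m x0) (leqnn (m x0)) => n.
elim: n x0 Px0 => [|n IHn] x Px mx.
  by exists x; split=> // y _; apply: leq_trans mx _.
case: (classic (exists y, Pr y /\ (m y <= n)%N)) => [[y [Py my]] | none].
  exact: IHn Py my.
exists x; split=> // y Py; apply: leq_trans mx _; rewrite ltnNge; apply/negP => my.
by apply: none; exists y.
Qed.

Section CuspRing.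
Variable K : fieldType.
Hypothesis sqrN1_neq : forall a : K, a ^+ 2 != -1.
Local Notation KX := {fraction {poly K}}.
Local Notation P := ('X^2 + 1 : {poly K}).
Local Notation R := (@inR K).
Local Notation p := (P%:F : KX).
Implicit Types (f g h q : {poly K}) (x y z : KX).

Lemma size_P : size P = 3%N.
Proof. by rewrite -[1]/(1%:P) size_XnaddC. Qed.

Lemma P_neq0 : P != 0.
Proof. by rewrite -size_poly_eq0 size_P. Qed.

Lemma coef0_P : P`_0 = 1.
Proof. by rewrite coefD coefXn coef1 add0r. Qed.

Lemma coef1_P : P`_1 = 0.
Proof. by rewrite coefD coefXn coef1 add0r. Qed.

Lemma P_irr : irreducible_poly P.
Proof.
apply: cubic_irreducible; first by rewrite size_P.
move=> x; rewrite /root !hornerE; apply/negP => /eqP x2N1.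
move: (sqrN1_neq x).
by rewrite -(subr0 (x ^+ 2)) -x2N1 opprD addrA subrr add0r eqxx.
Qed.

Lemma P_coprime q : ~~ (P %| q) -> coprimep P q.
Proof. by rewrite irreducible_poly_coprime //; exact: P_irr. Qed.

Lemma P_dvdM (a b : {poly K}) : P %| a * b -> (P %| a) || (P %| b).
Proof.
by have [//|/P_coprime Pa] := boolP (P %| a); rewrite Gauss_dvdpr.
Qed.

Lemma P_ndvdM (a b : {poly K}) : ~~ (P %| a) -> ~~ (P %| b) -> ~~ (P %| a * b).
Proof. by move=> Pa Pb; apply/negP => /P_dvdM; rewrite (negbTE Pa) (negbTE Pb). Qed.

Lemma P_ndvd_small q : q != 0 -> (size q <= 2)%N -> ~~ (P %| q).
Proof.
by move=> q0 sq; apply/negP => /(dvdp_leq q0); rewrite size_P => /leq_trans/(_ sq).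
Qed.

Lemma P_ndvd1 : ~~ (P %| 1).
Proof. by apply: P_ndvd_small; rewrite ?oner_eq0 ?size_poly1. Qed.

Lemma P_ndvdXn n : ~~ (P %| 'X^n).
Proof.
elim: n => [|n IHn]; first exact: P_ndvd1.
rewrite [_ ^+ n.+1]exprS; apply: (P_ndvdM _ IHn).
by rewrite P_ndvd_small ?polyX_eq0 ?size_polyX.
Qed.

Lemma coef_PexpM k q i : (i < 2)%N -> (P ^+ k * q)`_i = q`_i.
Proof.
move=> i2; elim: k q => [|k IHk] q; first by rewrite expr0 mul1r.
rewrite exprSr -mulrA IHk; move: i2 {IHk}.
case: i => [|[|]] // _;
  by rewrite ?coef0M ?coef1M coef0_P ?coef1_P ?mul0r ?addr0 mul1r.
Qed.

Lemma P_factor f : f != 0 -> exists k h, f = P ^+ k * h /\ ~~ (P %| h).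
Proof.
move: {2}(size f) (leqnn (size f)) => n; elim: n f => [|n IHn] f sf f0.
  by move: f0; rewrite -size_poly_eq0 -leqn0 sf.
have [Pf|Pf] := boolP (P %| f); last by exists 0%N, f; rewrite expr0 mul1r.
have fE := divpK Pf; set q := f %/ P in fE.
have q0 : q != 0 by apply: contraNneq f0 => q0; rewrite -fE q0 mul0r.
have [|k [h [qE Ph]]] := IHn q _ q0.
  by move: sf; rewrite -fE size_mul ?P_neq0 // size_P addnS addn2 ltnS => /ltnW.
by exists k.+1, h; split=> //; rewrite -fE qE [_ ^+ k.+1]exprSr mulrAC.
Qed.

(* membership in K[X^2, X^3] *)
Definition cusp (f : {poly K}) := f`_1 = 0.

Lemma cuspM f g : cusp f -> cusp g -> cusp (f * g).
Proof. by rewrite /cusp coef1M => -> ->; rewrite mul0r mulr0 addr0. Qed.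

Lemma cuspD f g : cusp f -> cusp g -> cusp (f + g).
Proof. by rewrite /cusp coefD => -> ->; rewrite addr0. Qed.

Lemma cuspN f : cusp f -> cusp (- f).
Proof. by rewrite /cusp coefN => ->; rewrite oppr0. Qed.

Lemma cuspB f g : cusp f -> cusp g -> cusp (f - g).
Proof. by move=> cf cg; apply: cuspD cf (cuspN cg). Qed.

Lemma cuspC c : cusp c%:P.
Proof. by rewrite /cusp coefC. Qed.

Lemma cusp0 : cusp 0.
Proof. by rewrite /cusp coef0. Qed.

Lemma cusp1 : cusp 1.
Proof. by rewrite /cusp coef1. Qed.

Lemma cuspXn n : n != 1%N -> cusp 'X^n.
Proof. by rewrite /cusp coefXn eq_sym => /negbTE ->. Qed.

Lemma cusp_XnM b (k : {poly K}) : (2 <= b)%N -> cusp ('X^b * k).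
Proof. by rewrite /cusp coefXnM; case: b => [|[|]]. Qed.

Lemma cusp_PexpM k q : cusp (P ^+ k * q) <-> cusp q.
Proof. by rewrite /cusp coef_PexpM. Qed.

Lemma cusp_cancel f g f' g' : f * g = f' * g' -> cusp f' -> cusp g ->
  g`_0 != 0 -> cusp g' -> cusp f.
Proof.
rewrite /cusp => fgE f'1 g1 g0 g'1; have /= := congr1 (fun q => q`_1) fgE.
rewrite !coef1M f'1 g1 g'1 !mulr0 !mul0r !add0r => /eqP.
by rewrite mulf_eq0 (negbTE g0) orbF => /eqP.
Qed.

Lemma Xsqr_drop_polyE f : cusp f -> f`_0 = 0 -> f = 'X^2 * drop_poly 2 f.
Proof.
move=> f1 f0; rewrite -{1}(poly_take_drop 2 f) mulrC.
suff -> : take_poly 2 f = 0 by rewrite add0r.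
by apply/polyP => -[|[|i]]; rewrite coef_take_poly coef0.
Qed.

(* the denominators: R = S^-1 K[X^2, X^3] for S = {g | denom g} *)
Definition denom (g : {poly K}) := [/\ cusp g, g`_0 != 0 & ~~ (P %| g)].

Lemma denom_neq0 g : denom g -> g != 0.
Proof. by case=> _ g0 _; apply: contraNneq g0 => ->; rewrite coef0. Qed.

Lemma denom_tofrac_neq0 g : denom g -> g%:F != 0 :> KX.
Proof. by move/denom_neq0; rewrite tofrac_eq0. Qed.

Lemma denomM g h : denom g -> denom h -> denom (g * h).
Proof.
case=> g1 g0 Pg [h1 h0 Ph]; split; first exact: cuspM.
- by rewrite coef0M mulf_neq0.
- exact: P_ndvdM.
Qed.

Lemma denom1 : denom 1.
Proof. by split; [exact: cusp1 | rewrite coef1 oner_eq0 | exact: P_ndvd1]. Qed.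

Definition cusp_cofactor (h : {poly K}) := (h`_0)%:P - (h`_1)%:P * 'X.

Lemma coef0_cusp_cofactor h : (cusp_cofactor h)`_0 = h`_0.
Proof. by rewrite coefB coefC coefCM coefX mulr0 subr0. Qed.

Lemma cusp_mul_cofactor h : cusp (h * cusp_cofactor h).
Proof.
rewrite /cusp coef1M coef0_cusp_cofactor coefB coefC coefCM coefX mulr1 sub0r.
by rewrite mulrN mulrC addNr.
Qed.

Lemma denom_mul_cofactor h : h`_0 != 0 -> ~~ (P %| h) ->
  denom (h * cusp_cofactor h).
Proof.
move=> h0 Ph; have l0 := coef0_cusp_cofactor h.
have l_neq0 : cusp_cofactor h != 0.
  by apply: contraNneq h0 => e; rewrite -l0 e coef0.
split; first exact: cusp_mul_cofactor.
  by rewrite coef0M l0 mulf_neq0.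
rewrite P_ndvdM // P_ndvd_small //.
apply/leq_sizeP => -[|[|j]] // _.
by rewrite coefB coefC coefCM coefX mulr0 subr0.
Qed.

Definition rep (x : KX) f g := [/\ cusp f, denom g & x = f%:F / g%:F].

Lemma cancel_P_denom f1 g1 f2 g2 : g1 != 0 -> ~~ (P %| g2) ->
  f1 * g2 = f2 * g1 ->
  exists k f h, [/\ f1 = P ^+ k * f, g1 = P ^+ k * h & ~~ (P %| h)].
Proof.
move=> g1_neq0 Pg2 e; have [k [h [g1E Ph]]] := P_factor g1_neq0.
have /divpK f1E : P ^+ k %| f1.
  rewrite -(Gauss_dvdpl _ (coprimep_expl k (P_coprime Pg2))) e g1E mulrCA.
  exact: dvdp_mulIl.
by exists k, (f1 %/ P ^+ k), h; rewrite mulrC f1E.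
Qed.

Lemma inR_rep x : R x <-> exists f g, rep x f g.
Proof.
split=> [[[f1 [g1 [f1c g1c g10 xE1]]] [f2 [g2 [Pg2 xE2]]]] | ]; last first.
  by case=> f [g [fc [gc g0 Pg] xE]]; split; exists f, g.
have g1_neq0 : g1 != 0 by apply: contraNneq g10 => ->; rewrite coef0.
have g2_neq0 : g2 != 0 by apply: contraNneq Pg2 => ->; rewrite dvdp0.
have e : f1 * g2 = f2 * g1 by apply/tofrac_divE => //; rewrite -xE1 -xE2.
have [k [f [h [f1E g1E Ph]]]] := cancel_P_denom g1_neq0 Pg2 e.
have h0 : h`_0 != 0 by rewrite -(coef_PexpM k) // -g1E.
have hl_neq0 := denom_neq0 (denom_mul_cofactor h0 Ph).
exists (f * cusp_cofactor h), (h * cusp_cofactor h); split.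
- apply: (cusp_cancel (g := g1) (f' := f1) (g' := h * cusp_cofactor h)) => //.
    by rewrite f1E g1E; ring.
  exact: cusp_mul_cofactor.
- exact: denom_mul_cofactor.
- by rewrite xE1; apply/tofrac_divE => //; rewrite f1E g1E; ring.
Qed.

Lemma rep_poly f : cusp f -> rep f%:F f 1.
Proof. by move=> cf; split=> //; [exact: denom1 | rewrite tofrac1 divr1]. Qed.

Lemma rep0 : rep 0 0 1.
Proof. by rewrite -{1}tofrac0; exact/rep_poly/cusp0. Qed.

Lemma rep1 : rep 1 1 1.
Proof. by rewrite -{1}tofrac1; exact/rep_poly/cusp1. Qed.

Lemma rep_mul x y f g f' g' : rep x f g -> rep y f' g' ->
  rep (x * y) (f * f') (g * g').
Proof.
case=> cf dg -> [cf' dg' ->]; split; [exact: cuspM | exact: denomM |].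
by rewrite !tofracM mulf_div.
Qed.

Lemma rep_add x y f g f' g' : rep x f g -> rep y f' g' ->
  rep (x + y) (f * g' + f' * g) (g * g').
Proof.
case=> cf dg -> [cf' dg' ->]; split.
- by apply: cuspD; apply: cuspM => //; case: dg'; case: dg.
- exact: denomM.
- by rewrite addf_div ?denom_tofrac_neq0 // tofracD !tofracM.
Qed.

Lemma rep_opp x f g : rep x f g -> rep (- x) (- f) g.
Proof. by case=> cf dg ->; split=> //; [exact: cuspN | rewrite tofracN mulNr]. Qed.

Lemma rep_cross x f g f' g' : rep x f g -> rep x f' g' -> f * g' = f' * g.
Proof.
case=> _ dg xE [_ dg' xE']; apply/tofrac_divE; rewrite -?xE -?xE' //;
  exact: denom_neq0.
Qed.

Lemma inR_frac f g : cusp f -> denom g -> R (f%:F / g%:F).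
Proof. by move=> cf dg; apply/inR_rep; exists f, g. Qed.

Lemma inR1 : R 1.
Proof. by apply/inR_rep; exists 1, 1; exact: rep1. Qed.

Lemma inR_poly f : cusp f -> R f%:F.
Proof. by move=> cf; apply/inR_rep; exists f, 1; exact: rep_poly. Qed.

Lemma inR_Xn n : n != 1%N -> R ('X^n)%:F.
Proof. by move/cuspXn/inR_poly. Qed.

Lemma inR_p : R p.
Proof. exact/inR_poly/coef1_P. Qed.

Lemma inR_mul x y : R x -> R y -> R (x * y).
Proof.
move=> /inR_rep [f [g rx]] /inR_rep [f' [g' ry]]; apply/inR_rep.
by exists (f * f'), (g * g'); exact: rep_mul.
Qed.

Lemma inR_sub x y : R x -> R y -> R (x - y).
Proof.
move=> /inR_rep [f [g rx]] /inR_rep [f' [g' /rep_opp ry]]; apply/inR_rep.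
by exists (f * g' + - f' * g), (g * g'); exact: rep_add.
Qed.

Lemma inR_subring : is_subring R.
Proof.
by split; [exact: inR1 | exact: inR_sub | exact: inR_mul].
Qed.

Lemma unitIn_rep x f g : rep x f g -> unitIn R x <-> f`_0 != 0 /\ ~~ (P %| f).
Proof.
move=> rx; have [cf dg xE] := rx; split.
  case=> _ [v [/inR_rep [f' [g' rv]] xv]].
  have := rep_cross (rep_mul rx rv); rewrite xv => /(_ _ _ rep1).
  rewrite mulr1 mul1r => ff'E; have [_ dg' _] := rv.
  have [_ gg'0 Pgg'] := denomM dg dg'.
  split; first by apply: contraNneq gg'0; rewrite -ff'E coef0M => ->; rewrite mul0r.
  by apply: contraNN Pgg'; rewrite -ff'E; exact: dvdp_mulr.
case=> f0 Pf; split; first by apply/inR_rep; exists f, g.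
have f_neq0 : f != 0 by apply: contraNneq f0 => ->; rewrite coef0.
exists (g%:F / f%:F); split; first by apply: inR_frac; case: dg.
by rewrite xE mulf_div [g%:F * _]mulrC divff // mulf_neq0 ?tofrac_eq0 ?denom_neq0.
Qed.

Definition M0 x := exists f g, rep x f g /\ f`_0 = 0.
Local Notation Mp := (dvdIn R p).

Lemma M0_rep x f g : rep x f g -> M0 x <-> f`_0 = 0.
Proof.
move=> rx; split; last by move=> f0; exists f, g.
case=> f' [g' [rx' f'0]]; have /(congr1 (fun q => q`_0)) := rep_cross rx rx'.
rewrite /= !coef0M f'0 mul0r => /eqP; rewrite mulf_eq0 => /orP[/eqP //|].
by case: rx' => _ [_ /negbTE ->].
Qed.

Lemma Mp_rep x f g : rep x f g -> Mp x <-> P %| f.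
Proof.
move=> rx; have [cf dg xE] := rx; split.
  case=> z [/inR_rep [f' [g' rz]] xE'].
  have := rep_cross rx; rewrite xE' => /(_ _ _ (rep_mul (rep_poly coef1_P) rz)).
  rewrite mul1r => e.
  have : P %| f * g' by rewrite e -mulrA dvdp_mulIl.
  by move/P_dvdM; case: rz => _ [_ _ /negbTE ->]; rewrite orbF.
move=> /divpK fE; exists ((f %/ P)%:F / g%:F); split.
  by apply: inR_frac dg; apply/(cusp_PexpM 1); rewrite expr1 mulrC fE.
by rewrite xE -{1}fE tofracM mulrCA mulrA.
Qed.

Lemma rep_trichotomy x f g : rep x f g -> [\/ M0 x, Mp x | unitIn R x].
Proof.
move=> rx; have [f0|f0] := eqVneq f`_0 0; first by constructor 1; apply/(M0_rep rx).
have [Pf|Pf] := boolP (P %| f); first by constructor 2; apply/(Mp_rep rx).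
by constructor 3; apply/(unitIn_rep rx).
Qed.

Lemma M0_prime : prime_idealIn R M0.
Proof.
split.
  split; last by move/(M0_rep rep1)/eqP; rewrite coef1 oner_eq0.
  split.
  - by move=> x [f [g [rx _]]]; apply/inR_rep; exists f, g.
  - by apply/(M0_rep rep0); rewrite coef0.
  - move=> x y [f [g [rx f0]]] [f' [g' [ry f'0]]]; apply/(M0_rep (rep_add rx ry)).
    by rewrite coefD !coef0M f0 f'0 !mul0r addr0.
  - move=> r x /inR_rep [f [g rr]] [f' [g' [rx f'0]]].
    by apply/(M0_rep (rep_mul rr rx)); rewrite coef0M f'0 mulr0.
move=> a b /inR_rep [f [g ra]] /inR_rep [f' [g' rb]].
move/(M0_rep (rep_mul ra rb))/eqP; rewrite coef0M mulf_eq0.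
by case/orP => /eqP f0; [left; apply/(M0_rep ra) | right; apply/(M0_rep rb)].
Qed.

Lemma p_prime : primeIn R p.
Proof.
apply/(primeInE inR_subring); split; first exact: inR_p.
  by apply/eqP; rewrite tofrac_eq0 P_neq0.
split.
  split; first exact: (dvdIn_ideal inR_subring inR_p).
  by move/(Mp_rep rep1); apply/negP; exact: P_ndvd1.
move=> a b /inR_rep [f [g ra]] /inR_rep [f' [g' rb]].
move/(Mp_rep (rep_mul ra rb))/P_dvdM.
by case/orP => Pf; [left; apply/(Mp_rep ra) | right; apply/(Mp_rep rb)].
Qed.

Lemma Mp_prime : prime_idealIn R Mp.
Proof. by have /(primeInE inR_subring) [] := p_prime. Qed.

Lemma M0_Xn n : n != 1%N -> n != 0%N -> M0 ('X^n)%:F.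
Proof.
move=> n1 n0; apply/(M0_rep (rep_poly (cuspXn n1))).
by rewrite coefXn eq_sym (negbTE n0).
Qed.

Lemma Mp_Xn n : n != 1%N -> ~ Mp ('X^n)%:F.
Proof.
by move=> n1 /(Mp_rep (rep_poly (cuspXn n1))); apply/negP; exact: P_ndvdXn.
Qed.

Lemma M0_p : ~ M0 p.
Proof.
by move/(M0_rep (rep_poly coef1_P)); rewrite coef0_P; apply/eqP; exact: oner_neq0.
Qed.

Lemma Mp_p : Mp p.
Proof. by exists 1; rewrite mulr1; split=> //; exact: inR1. Qed.

Lemma nonunit_M0_Mp x : R x -> ~ unitIn R x -> M0 x \/ Mp x.
Proof. by move=> /inR_rep [f [g /rep_trichotomy []]]; auto. Qed.

Lemma M0_not_sub_Mp : ~ set_sub M0 Mp.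
Proof. by move/(_ _ (M0_Xn (n := 2) isT isT)); exact: Mp_Xn. Qed.

Lemma Mp_not_sub_M0 : ~ set_sub Mp M0.
Proof. by move/(_ _ Mp_p); exact: M0_p. Qed.

Lemma proper_sub_M0_or_Mp I : proper_idealIn R I -> set_sub I M0 \/ set_sub I Mp.
Proof.
have [[M0p _] [Mpp _]] := (M0_prime, Mp_prime).
exact: (proper_ideal_sub_cover inR_subring M0p Mpp nonunit_M0_Mp).
Qed.

Lemma M0_maximal : maximal_idealIn R M0.
Proof.
have [M0p _] := M0_prime.
exact: (maximal_of_cover M0p M0_not_sub_Mp proper_sub_M0_or_Mp).
Qed.

Lemma Mp_maximal : maximal_idealIn R Mp.
Proof.
have [Mpp _] := Mp_prime; apply: (maximal_of_cover Mpp Mp_not_sub_M0).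
by move=> J /proper_sub_M0_or_Mp /or_comm.
Qed.

Lemma two_maximal : exactly_two_maximal R.
Proof.
have [[M0p _] [Mpp _]] := (M0_prime, Mp_prime).
exact: (exactly_two_maximal_of_cover inR_subring M0p Mpp nonunit_M0_Mp
  M0_not_sub_Mp Mp_not_sub_M0).
Qed.

Lemma ideal_numerator Q x f g : idealIn R Q -> Q x -> rep x f g -> Q f%:F.
Proof.
case=> _ _ _ QM Qx [cf dg xE].
have -> : f%:F = g%:F * x by rewrite xE mulrC divfK // denom_tofrac_neq0.
by apply: QM Qx; apply: inR_poly; case: dg.
Qed.

Lemma rep_numerator_neq0 x f g : rep x f g -> x != 0 -> f != 0.
Proof. by case=> _ _ -> x0; apply: contraNneq x0 => ->; rewrite tofrac0 mul0r. Qed.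

(* X^(n m) is both a power of X^n and a multiple of X^m in R. *)
Lemma prime_idealXn Q m n : prime_idealIn R Q -> m != 1%N -> (2 <= n)%N ->
  Q ('X^m)%:F -> Q ('X^n)%:F.
Proof.
move=> Qprime m1 n2 QXm; have [[[_ _ _ QM] _] _] := Qprime.
have n1 : n != 1%N by case: n n2 => [|[]].
apply: (prime_idealX inR_subring (n := m) Qprime (inR_Xn n1)).
have XnmE : ('X^n ^+ m : {poly K}) = 'X^(m * n.-1) * 'X^m.
  by rewrite -exprM -exprD -mulnSr prednK 1?mulnC // ltnW.
rewrite -rmorphXn /= XnmE tofracM; apply: QM QXm; apply: inR_Xn.
by rewrite muln_eq1 negb_and m1.
Qed.

Lemma M0_sub_ideal Q : idealIn R Q -> Q ('X^2)%:F -> Q ('X^3)%:F -> set_sub M0 Q.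
Proof.
move=> [_ _ QD QM] QX2 QX3 x [f [g [[cf dg xE] f0]]].
set d := drop_poly 2 f; set c := d`_1.
have cd : cusp (d - c%:P * 'X) by rewrite /cusp coefB coefCM coefX mulr1 subrr.
have -> : x = (d - c%:P * 'X)%:F / g%:F * ('X^2)%:F + (c%:P)%:F / g%:F * ('X^3)%:F.
  by rewrite xE {1}(Xsqr_drop_polyE cf f0) -/d tofracB !tofracM; ring.
by apply: QD; apply: QM => //; apply: inR_frac => //; exact: cuspC.
Qed.

Lemma M0_sub_prime Q y : prime_idealIn R Q -> set_sub Q M0 -> Q y -> y != 0 ->
  set_sub M0 Q.
Proof.
move=> Qprime QM0 Qy y0; have [[idQ _] QP] := Qprime; have [QS _ _ QM] := idQ.
have [f [g ry]] := (inR_rep y).1 (QS _ Qy).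
have [b [k [fE k0]]] := Xn_factor (rep_numerator_neq0 ry y0).
have ckl := cusp_mul_cofactor k.
have : Q ('X^(b + 2) * (k * cusp_cofactor k))%:F.
  have -> : 'X^(b + 2) * (k * cusp_cofactor k) = 'X^2 * cusp_cofactor k * f.
    by rewrite fE exprD; ring.
  rewrite tofracM; apply: QM (ideal_numerator idQ Qy ry).
  exact/inR_poly/cusp_XnM.
rewrite tofracM => /QP [].
- by apply: inR_Xn; rewrite addn2.
- exact: inR_poly.
- by move=> QX; apply: M0_sub_ideal idQ _ _; apply: (prime_idealXn Qprime _ _ QX);
    rewrite ?addn2.
- move/QM0/(M0_rep (rep_poly ckl))/eqP.
  by rewrite coef0M coef0_cusp_cofactor mulf_eq0 orbb (negbTE k0).
Qed.

Lemma Mp_sub_prime Q y : prime_idealIn R Q -> set_sub Q Mp -> Q y -> y != 0 ->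
  set_sub Mp Q.
Proof.
move=> Qprime QMp Qy y0; have [[idQ _] QP] := Qprime; have [QS _ _ QM] := idQ.
have [f [g ry]] := (inR_rep y).1 (QS _ Qy); have [cf _ _] := ry.
have [k [h [fE Ph]]] := P_factor (rep_numerator_neq0 ry y0).
have ch : cusp h by apply/(cusp_PexpM k); rewrite -fE.
have Qp : Q p.
  move: (ideal_numerator idQ Qy ry); rewrite fE tofracM rmorphXn /= => /QP [].
  - exact: (subringX inR_subring _ inR_p).
  - exact: inR_poly.
  - exact: (prime_idealX inR_subring Qprime inR_p).
  - by move/QMp/(Mp_rep (rep_poly ch)); rewrite (negbTE Ph).
by move=> _ [z [Rz ->]]; rewrite mulrC; exact: QM.
Qed.

Lemma prime_zero_or_maximal Q : prime_idealIn R Q ->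
  set_eq Q (fun x => x = 0) \/ maximal_idealIn R Q.
Proof.
move=> Qprime; have [Qproper _] := Qprime; have [[_ Q0 _ _] _] := Qproper.
case: (classic (exists y, Q y /\ y != 0)) => [[y [Qy y0]] | Qzero]; last first.
  left=> x; split=> [Qx | ->] //; apply: NNPP => x0.
  by apply: Qzero; exists x; split=> //; exact/eqP.
right; case: (proper_sub_M0_or_Mp Qproper) => QM.
- apply: (maximal_ideal_sub M0_maximal Qproper).
  exact: M0_sub_prime Qprime QM Qy y0.
- apply: (maximal_ideal_sub Mp_maximal Qproper).
  exact: Mp_sub_prime Qprime QM Qy y0.
Qed.

Lemma krull_dim_one_R : krull_dim_one R.
Proof.
apply: (krull_dim_one_of_primes inR_subring prime_zero_or_maximal M0_prime).
move/(_ ('X^2)%:F) => [/(_ (M0_Xn (n := 2) isT isT)) /eqP].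
by rewrite tofrac_eq0 -size_poly_eq0 size_polyXn.
Qed.

Lemma unit_notM0 x : unitIn R x -> ~ M0 x.
Proof. by have [[idM0 M0_1] _] := M0_prime => xU /(ideal_unit idM0)/(_ xU). Qed.

Lemma irred_XnM (b : nat) (k : {poly K}) g : (b == 2%N) || (b == 3%N) ->
  k`_0 != 0 -> ~~ (P %| k) -> denom g -> irredIn R (('X^b * k)%:F / g%:F).
Proof.
move=> b23 k0 Pk dg; have b2 : (2 <= b)%N by case/orP: b23 => /eqP ->.
have b4 : (b < 4)%N by case/orP: b23 => /eqP ->.
have rx : rep (('X^b * k)%:F / g%:F) ('X^b * k) g by split=> //; exact: cusp_XnM.
have fb : ('X^b * k)`_b = k`_0 by rewrite coefXnM ltnn subnn.
have Pf : ~~ (P %| 'X^b * k) by apply: P_ndvdM Pk; exact: P_ndvdXn.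
split.
- by apply/inR_rep; exists ('X^b * k), g.
- apply/eqP; apply: mulf_neq0; last by rewrite invr_eq0 denom_tofrac_neq0.
  by rewrite tofrac_eq0; apply: contraNneq k0 => f0; rewrite -fb f0 coef0.
- by move/unit_notM0; apply; apply/(M0_rep rx); rewrite coefXnM (leq_trans _ b2).
move=> c d /inR_rep [fc [gc rc]] /inR_rep [fd [gd rd]] xE.
have := rep_cross rx; rewrite xE => /(_ _ _ (rep_mul rc rd)) e.
have [[cfc dgc _] [cfd dgd _]] := (rc, rd); have [_ gcd0 Pgcd] := denomM dgc dgd.
have Pfcd : ~~ (P %| fc * fd * g) by rewrite -e; exact: P_ndvdM.
have [fc0|fc0] := eqVneq fc`_0 0; last first.
  left; apply/(unitIn_rep rc); split=> //.
  by apply: contraNN Pfcd => /(dvdp_mulr fd)/(dvdp_mulr g).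
have [fd0|fd0] := eqVneq fd`_0 0; last first.
  right; apply/(unitIn_rep rd); split=> //.
  by apply: contraNN Pfcd => /(dvdp_mull fc)/(dvdp_mulr g).
have fcE := Xsqr_drop_polyE cfc fc0; have fdE := Xsqr_drop_polyE cfd fd0.
have := congr1 (fun q => q`_b) e; rewrite /= -mulrA coefXnM ltnn subnn coef0M.
rewrite fcE fdE (_ : _ * _ * g = 'X^4 * (drop_poly 2 fc * drop_poly 2 fd * g));
  last by ring.
by rewrite coefXnM b4 => /eqP; rewrite mulf_eq0 (negbTE k0) (negbTE gcd0).
Qed.

Lemma irred_Xn (b : nat) : (b == 2%N) || (b == 3%N) -> irredIn R ('X^b)%:F.
Proof.
move=> b23; have := irred_XnM b23 _ P_ndvd1 denom1.
by rewrite mulr1 tofrac1 divr1; apply; rewrite coef1 oner_eq0.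
Qed.

Lemma notR_X : ~ R 'X%:F.
Proof.
move/inR_rep => [f [g [cf dg XE]]].
have /(congr1 (fun q => q`_1)) : 'X * g = f * 1.
  by apply/tofrac_divE; rewrite ?oner_eq0 ?denom_neq0 // tofrac1 divr1.
by rewrite /= mulr1 coefXM cf; case: dg => _ /eqP.
Qed.

Lemma primeIn_assoc_p (q : KX) : primeIn R q -> assocIn R p q.
Proof.
move=> qprime; have [Rq q0 qNU _] := qprime; have [pR p0 pNU _] := p_prime.
case: (classic (Mp q)) => [|nMpq].
  exact: (dvdIn_primeIn_assoc inR_subring pR p0 pNU qprime).
have /(primeInE inR_subring) [_ _ qRprime] := qprime.
have qRq : dvdIn R q q by exists 1; rewrite mulr1; split=> //; exact: inR1.
case: (proper_sub_M0_or_Mp (proj1 qRprime)) => [qRM0 | /(_ _ qRq) //].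
have M0_qR := M0_sub_prime qRprime qRM0 qRq (introN eqP q0).
have [c [Rc X2E]] := M0_qR _ (M0_Xn (n := 2) isT isT).
have [d [Rd X3E]] := M0_qR _ (M0_Xn (n := 3) isT isT).
have [_ _ _ X2irr] := irred_Xn (b := 2) isT.
have [//|[_ [ci [Rci cci]]]] := X2irr _ _ Rq Rc X2E.
exfalso; apply: notR_X; have -> : 'X%:F = ci * d.
  apply: (mulfI (x := ('X^2)%:F)).
    by rewrite tofrac_eq0 -size_poly_eq0 size_polyXn.
  by rewrite -tofracM -exprSr X3E X2E -mulrA [c * _]mulrA cci mul1r.
exact: inR_mul.
Qed.

Lemma irred_nonassoc_shape a : irredIn R a -> ~ assocIn R p a ->
  exists (b : nat) (k : {poly K}) g,
    [/\ (b == 2%N) || (b == 3%N), k`_0 != 0, ~~ (P %| k), denom g &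
         a = ('X^b * k)%:F / g%:F].
Proof.
move=> airr na; have [Ra a0 aNU afac] := airr.
have [f [g ra]] := (inR_rep a).1 Ra; have [cf dg aE] := ra.
have nMp : ~ Mp a.
  case=> z [Rz aE']; case: (afac _ _ inR_p Rz aE') => [pU | zU].
  - by have [_ _ pNU _] := p_prime; exact: pNU.
  - by apply: na; exists z.
have Pf : ~~ (P %| f) by apply/negP => /(Mp_rep ra).
have f0 : f`_0 = 0 by case: (rep_trichotomy ra) => [/(M0_rep ra) | // | //].
have [b [k [fE k0]]] := Xn_factor (rep_numerator_neq0 ra (introN eqP a0)).
have fb : f`_b = k`_0 by rewrite fE coefXnM ltnn subnn.
have Pk : ~~ (P %| k) by apply: contraNN Pf; rewrite fE; exact: dvdp_mull.
have b2 : (2 <= b)%N.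
  by case: b fb {fE} => [|[|//]] fb; move: k0; rewrite -fb ?f0 ?cf eqxx.
have b4 : (b < 4)%N.
  rewrite ltnNge; apply/negP => b4.
  have cX : cusp ('X^(b - 2) * k) by apply: cusp_XnM; rewrite leq_subRL // ltnW.
  have aE2 : a = ('X^2)%:F * (('X^(b - 2) * k)%:F / g%:F).
    by rewrite aE fE mulrA -tofracM mulrA -exprD subnKC.
  case: (afac _ _ (inR_Xn (n := 2) isT) (inR_frac cX dg) aE2) => /unit_notM0; apply.
  - exact: M0_Xn.
  - by apply/(M0_rep (And3 cX dg erefl)); rewrite coefXnM subn_gt0 (leq_trans _ b4).
exists b, k, g; split=> //; last by rewrite aE fE.
by case: b b2 b4 {fE fb} => [|[|[|[|]]]].
Qed.

Lemma nonassoc_irred_not_abs a :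
  irredIn R a -> ~ assocIn R p a -> ~ abs_irredIn R a.
Proof.
move=> airr na [_ aabs].
have [b [k [g [b23 k0 Pk dg aE]]]] := irred_nonassoc_shape airr na.
have k20 : (k * k)`_0 != 0 by rewrite coef0M mulf_neq0.
have Pk2 : ~~ (P %| k * k) by exact: P_ndvdM.
case/orP: b23 => /eqP bE; subst b.
- have [] := aabs 3 [:: ('X^3)%:F; ('X^3 * (k * k * k))%:F / (g * g * g)%:F].
  + move=> x; rewrite !inE => /orP[] /eqP ->; first exact: irred_Xn.
    apply: irred_XnM; rewrite ?coef0M ?mulf_neq0 ?P_ndvdM //.
    exact/denomM/dg/denomM.
  + by rewrite !big_cons big_nil aE !tofracM !invfM; ring.
  + by [].
- have [] := aabs 2 [:: ('X^2)%:F; ('X^2)%:F; ('X^2 * (k * k))%:F / (g * g)%:F].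
  + move=> x; rewrite !inE => /or3P[] /eqP ->; try exact: irred_Xn.
    exact/irred_XnM/denomM.
  + by rewrite !big_cons big_nil aE !tofracM !invfM; ring.
  + by [].
Qed.

Section CuspIdeals.
Variable J : {poly K} -> Prop.
Hypotheses (J0 : J 0) (JB : forall f g, J f -> J g -> J (f - g))
  (JM : forall c f, cusp c -> J f -> J (c * f)).

Definition comb2 u v f := exists a b, [/\ cusp a, cusp b & f = a * u + b * v].

Lemma comb2_add u v f g : comb2 u v f -> comb2 u v g -> comb2 u v (f + g).
Proof.
case=> a [b [ca cb ->]] [a' [b' [ca' cb' ->]]].
by exists (a + a'), (b + b'); split; [exact: cuspD | exact: cuspD | ring].
Qed.

Lemma comb2_scale u v c f : comb2 u v f -> comb2 u v (c%:P * f).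
Proof.
case=> a [b [ca cb ->]]; exists (c%:P * a), (c%:P * b).
by split; [exact: cuspM (cuspC c) ca | exact: cuspM (cuspC c) cb | ring].
Qed.

Lemma comb2_J u v f : J u -> J v -> comb2 u v f -> J f.
Proof.
move=> Ju Jv [a [b [ca cb ->]]].
have -> : a * u + b * v = a * u - (0 - b * v) by rewrite sub0r opprK.
exact: JB (JM ca Ju) (JB J0 (JM cb Jv)).
Qed.

Section MinimalGenerators.
Variables u v : {poly K}.
Hypotheses (Ju : J u) (Jv : J v) (u_neq0 : u != 0).
Hypothesis u_min : forall f, J f -> f != 0 -> (size u <= size f)%N.
Hypothesis v_size :
  (exists f, J f /\ size f = (size u).+1) -> size v = (size u).+1.

Lemma same_size_comb2 f : J f -> f != 0 ->
  exists g, comb2 u v g /\ size g = size f.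
Proof.
move=> Jf f0; have umf := u_min Jf f0.
case: (ltngtP (size f) (size u).+1) => [sf | sf | sf].
- exists u; split; last by apply/eqP; rewrite eqn_leq umf -ltnS sf.
  by exists 1, 0; rewrite mul1r mul0r addr0; split; [exact: cusp1 | exact: cusp0 |].
- exists ('X^(size f - size u) * u); split.
    exists 'X^(size f - size u), 0; rewrite mul0r addr0.
    by split=> //; [apply: cuspXn; lia | exact: cusp0].
  by rewrite mulrC size_mulXn // subnK.
- exists v; split; last by rewrite sf; apply: v_size; exists f.
  by exists 0, 1; rewrite mul1r mul0r add0r; split; [exact: cusp0 | exact: cusp1 |].
Qed.

Lemma comb2_of_J f : J f -> comb2 u v f.
Proof.
move: {2}(size f) (leqnn (size f)) => n; elim: n f => [|n IHn] f sf Jf.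
  move: sf; rewrite leqn0 size_poly_eq0 => /eqP ->.
  by exists 0, 0; rewrite !mul0r addr0; split; [exact: cusp0 | exact: cusp0 |].
have [f0|f0] := eqVneq f 0.
  by exists 0, 0; rewrite f0 !mul0r addr0; split; [exact: cusp0 | exact: cusp0 |].
have [g [cg sg]] := same_size_comb2 Jf f0.
set c := lead_coef f / lead_coef g.
have : comb2 u v (f - c%:P * g).
  apply: IHn; last exact: JB Jf (JM (cuspC c) (comb2_J Ju Jv cg)).
  by rewrite -ltnS (leq_trans (size_sub_lead f0 sg) sf).
by move/(comb2_add (comb2_scale c cg)); rewrite addrC subrK.
Qed.

End MinimalGenerators.

Lemma cusp_ideal_two_generated :
  exists u v, [/\ J u, J v & forall f, J f -> comb2 u v f].
Proof.
case: (classic (exists f, J f /\ f != 0)) => [nz | J_zero]; last first.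
  exists 0, 0; split=> // f Jf; exists 0, 0; rewrite !mul0r addr0.
  split; [exact: cusp0 | exact: cusp0 |]; apply: NNPP => f0.
  by apply: J_zero; exists f; split=> //; exact/eqP.
have [u [[Ju u_neq0] u_min]] := classical_argmin (fun f : {poly K} => size f) nz.
have [v [Jv v_size]] : exists v, J v /\
    ((exists f, J f /\ size f = (size u).+1) -> size v = (size u).+1).
  case: (classic (exists f, J f /\ size f = (size u).+1)) => [[f [Jf sf]] | none].
    by exists f.
  by exists 0; split=> // ex; case: none.
exists u, v; split=> // f; apply: comb2_of_J => // g Jg g0.
exact: u_min (conj Jg g0).
Qed.

End CuspIdeals.

Lemma noetherian_R : noetherianIn R.
Proof.
move=> I idI; have [IS I0 ID IM] := idI.
pose J f := cusp f /\ I f%:F.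
have J0 : J 0 by split; [exact: cusp0 | rewrite tofrac0].
have JB f g : J f -> J g -> J (f - g).
  case=> cf If [cg Ig]; split; first exact: cuspB.
  by rewrite tofracB; apply: (idealB inR_subring idI If Ig).
have JM c f : cusp c -> J f -> J (c * f).
  move=> cc [cf If]; split; first exact: cuspM.
  by rewrite tofracM; apply: IM If; exact: inR_poly.
have [u [v [[cu Iu] [cv Iv] Jgen]]] := cusp_ideal_two_generated J0 JB JM.
exists [:: u%:F; v%:F]; split.
  by move=> a; rewrite !inE => /orP[] /eqP ->; exact: inR_poly.
move=> x; split.
  move=> Ix; have [f [g rx]] := (inR_rep x).1 (IS _ Ix); have [cf dg xE] := rx.
  have [a [b [ca cb fE]]] := Jgen f (conj cf (ideal_numerator idI Ix rx)).
  exists (fun i : 'I_2 => if val i == 0%N then a%:F / g%:F else b%:F / g%:F).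
  split; first by move=> i; case: ifP => _; exact: inR_frac.
  by rewrite !big_ord_recl big_ord0 /= xE fE tofracD !tofracM; ring.
case=> c [Rc ->]; rewrite !big_ord_recl big_ord0 /= addr0.
by apply: ID; exact: IM.
Qed.

End CuspRing.

Theorem mainTheorem8 (K : fieldType) (hK : forall a : K, a ^+ 2 != -1) :
  let R := @inR K in
  let p := (('X^2 + 1 : {poly K})%:F : {fraction {poly K}}) in
  [/\ primeIn R p,
      irredIn R (('X^2 : {poly K})%:F) /\ irredIn R (('X^3 : {poly K})%:F),
      [/\ is_subring R, noetherianIn R, krull_dim_one R & exactly_two_maximal R],
      (forall q, primeIn R q <-> assocIn R p q) &
      (exists a, irredIn R a /\ ~ assocIn R p a) /\
      (forall a, irredIn R a -> ~ assocIn R p a -> ~ abs_irredIn R a)].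
Proof.
move=> R p; split.
- exact: p_prime hK.
- by split; [exact (irred_Xn hK (b := 2) isT) | exact (irred_Xn hK (b := 3) isT)].
- split; [exact: inR_subring hK | exact: noetherian_R hK |
           exact: krull_dim_one_R hK | exact: two_maximal hK].
- move=> q; split; first exact (@primeIn_assoc_p K hK q).
  exact: (primeIn_assoc (inR_subring hK) (p_prime hK)).
- split; last exact: nonassoc_irred_not_abs hK.
  exists ('X^2)%:F; split; first exact (irred_Xn hK (b := 2) isT).
  by case=> u [[Ru _] X2E]; apply: (Mp_Xn hK (n := 2)) => //; exists u.
Qed.
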